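(* Let $A$ be a Banach lattice algebra. If $a,b\in BP_l(A)\cap BP_r(A)$, then $ab=ba$.
   Context: A Banach lattice algebra is a real Banach lattice $A$ with an associative bilinear product making it a Banach algebra such that $xy\ge0$ whenever $x,y\ge0$. $L_a(x)=ax$, $R_a(x)=xa$. A band projection on a Banach lattice $X$ is an operator $P$ with $P^2=P$, $0\le P\le I_X$. $BP_l(A)=\{a\in A_+: L_a\text{ is a band projection}\}$, $BP_r(A)=\{a\in A_+: R_a\text{ is a band projection}\}$. *)

From HB Require Import structures.
From mathcomp Require Import all_boot all_order all_algebra.
From mathcomp Require Import all_classical all_reals all_analysis.
Set Implicit Arguments. Unset Strict Implicit. Unset Printing Implicit Defensive.
Import Order.TTheory GRing.Theory Num.Theory.
Import numFieldNormedType.Exports.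
Local Open Scope ring_scope.

Section BLA.
Variables (R : realType) (V : completeNormedModType R).
Variables (le : V -> V -> Prop) (join : V -> V -> V) (mul : V -> V -> V).

Definition vector_lattice : Prop :=
  (forall x, le x x) /\
  [/\ (forall x y, le x y -> le y x -> x = y),
      (forall x y z, le x y -> le y z -> le x z),
      (forall x y z, le x y -> le (x + z) (y + z)),
      (forall (r : R) x y, 0 <= r -> le x y -> le (r *: x) (r *: y)) &
      (forall x y, [/\ le x (join x y), le y (join x y) &
                     forall z, le x z -> le y z -> le (join x y) z])].

Definition lattice_abs (x : V) : V := join x (- x).

Definition banach_lattice : Prop :=
  vector_lattice /\
  (forall x y, le (lattice_abs x) (lattice_abs y) -> `|x| <= `|y|).

Definition banach_lattice_algebra : Prop :=
  banach_lattice /\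
  [/\ (forall x y z, mul x (mul y z) = mul (mul x y) z),
       (forall x y z, mul (x + y) z = mul x z + mul y z),
       (forall x y z, mul x (y + z) = mul x y + mul x z),
       (forall (r : R) x y, mul (r *: x) y = r *: mul x y) &
       (forall (r : R) x y, mul x (r *: y) = r *: mul x y)] /\
  (forall x y, `|mul x y| <= `|x| * `|y|) /\
  (forall x y, le 0 x -> le 0 y -> le 0 (mul x y)).

Definition band_projection (P : V -> V) : Prop :=
  [/\ (forall x y, P (x + y) = P x + P y),
      (forall (r : R) x, P (r *: x) = r *: P x),
      (forall x, P (P x) = P x),
      (forall x, le 0 x -> le 0 (P x)) &
      (forall x, le 0 x -> le (P x) x)].

Definition BP_l : V -> Prop :=
  fun a => le 0 a /\ band_projection (fun x => mul a x).
Definition BP_r : V -> Prop :=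
  fun a => le 0 a /\ band_projection (fun x => mul x a).

End BLA.

From HB Require Import structures.
From mathcomp Require Import all_boot all_order all_algebra.
From mathcomp Require Import all_classical all_reals all_analysis.
Import Order.TTheory GRing.Theory Num.Theory.
Import numFieldNormedType.Exports.
Local Open Scope ring_scope.

(* Write L_a, R_a for left and right multiplication.  For b >= 0 with R_b <= I,
   the element u := ab - aba satisfies 0 <= u <= ab <= a, a u = u and u a = 0;
   then a(a - u) = a^2 - u >= 0 and R_a <= I give a^2 = (a^2 - u) a <= a^2 - u,
   so u = 0 and ab = aba.  The same argument in the opposite algebra gives
   ba = aba. *)

Section OrderedAlgebra.
Set Implicit Arguments. Unset Strict Implicit.
Variables (R : realType) (V : completeNormedModType R) (le : V -> V -> Prop) (mul : V -> V -> V).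
Hypothesis le_anti : forall x y, le x y -> le y x -> x = y.
Hypothesis le_trans : forall x y z, le x y -> le y z -> le x z.
Hypothesis leDr : forall x y z, le x y -> le (x + z) (y + z).
Hypothesis mulA : forall x y z, mul x (mul y z) = mul (mul x y) z.
Hypothesis mulDl : forall x y z, mul (x + y) z = mul x z + mul y z.
Hypothesis mulDr : forall x y z, mul x (y + z) = mul x y + mul x z.
Hypothesis mul_ge0 : forall x y, le 0 x -> le 0 y -> le 0 (mul x y).

Lemma le_D2r x y z : le (x + z) (y + z) <-> le x y.
Proof. by split=> [/(leDr (- z))|/leDr//]; rewrite !addrK. Qed.

Lemma le_subr_ge0 x y : le 0 (y - x) <-> le x y.
Proof. by rewrite -(le_D2r _ _ x) add0r subrK. Qed.

Lemma le_subl_ge0 x y : le 0 y -> le (x - y) x.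
Proof. by move/(leDr (x - y)); rewrite add0r (addrC y) subrK. Qed.

Lemma mul_subl x y z : mul (x - y) z = mul x z - mul y z.
Proof. by rewrite -{2}(subrK y x) (mulDl (x - y)) addrK. Qed.

Lemma mul_subr x y z : mul z (x - y) = mul z x - mul z y.
Proof. by rewrite -{2}(subrK y x) (mulDr z (x - y)) addrK. Qed.

Variable a : V.
Hypotheses (a_BP_l : BP_l le mul a) (a_BP_r : BP_r le mul a).

Lemma BP_eq0 u : le 0 u -> le u a -> mul a u = u -> mul u a = 0 -> u = 0.
Proof.
case: a_BP_l a_BP_r => _ [_ _ _ La_ge0 _] [_ [_ _ Ra_idem _ Ra_le]].
move=> u_ge0 u_le_a au_u ua_0.
have aa_u_ge0 : le 0 (mul a a - u).
  by rewrite -au_u -mul_subr; apply/La_ge0/le_subr_ge0.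
have := Ra_le _ aa_u_ge0.
rewrite mul_subl ua_0 subr0 Ra_idem => /(leDr (u - mul a a)).
by rewrite addrC subrK addrA subrK subrr => /le_anti; apply.
Qed.

Lemma BP_mul_sandwich b :
  le 0 b -> (forall x, le 0 x -> le (mul x b) x) -> mul a b = mul (mul a b) a.
Proof.
case: a_BP_l a_BP_r => a_ge0 [_ _ La_idem _ _] [_ [_ _ Ra_idem _ Ra_le]].
move=> b_ge0 Rb_le; have ab_ge0 := mul_ge0 a_ge0 b_ge0.
apply/eqP; rewrite -subr_eq0; apply/eqP/BP_eq0.
- by apply/le_subr_ge0/Ra_le.
- exact: le_trans (le_subl_ge0 _ (mul_ge0 ab_ge0 a_ge0)) (Rb_le _ a_ge0).
- by rewrite mul_subr La_idem mulA La_idem.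
- by rewrite mul_subl Ra_idem subrr.
Qed.

End OrderedAlgebra.

Theorem mainTheorem17 (R : realType) (V : completeNormedModType R)
  (le : V -> V -> Prop) (join : V -> V -> V) (mul : V -> V -> V)
  (HA : banach_lattice_algebra le join mul) (a b : V) :
  BP_l le mul a -> BP_r le mul a ->
  BP_l le mul b -> BP_r le mul b ->
  mul a b = mul b a.
Proof.
move: HA => [[[_ [le_anti le_trans leDr _ _]] _] [[mulA mulDl mulDr _ _] [_ mul_ge0]]].
move=> a_BP_l a_BP_r [b_ge0 [_ _ _ _ Lb_le]] [_ [_ _ _ _ Rb_le]].
have ab_aba : mul a b = mul (mul a b) a.
  exact: (BP_mul_sandwich le_anti le_trans leDr mulA mulDl mulDr mul_ge0
            a_BP_l a_BP_r b_ge0 Rb_le).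
have ba_aba : mul b a = mul a (mul b a).
  have mulA_op x y z : mul (mul z y) x = mul z (mul y x) by rewrite mulA.
  have mul_ge0_op x y : le 0 x -> le 0 y -> le 0 (mul y x).
    by move=> x_ge0 y_ge0; apply: mul_ge0.
  exact: (BP_mul_sandwich (mul := fun x y => mul y x) le_anti le_trans leDr
            mulA_op (fun x y z => mulDr z x y) (fun x y z => mulDl y z x)
            mul_ge0_op a_BP_r a_BP_l b_ge0 Lb_le).
by rewrite ab_aba ba_aba mulA.
Qed.
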